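(* Fix a shift $G$ for a nonempty configuration. In one outer iteration of the inter-level sampler, the probability that level $\ell$ is accepted (returned) is exactly $W_\ell2^G/A(G)$. Consequently, the probability that the outer iteration accepts some level is $M(G)/A(G)$.
   Context: Fix an integer $b\ge 2$. There is a set $\mathcal L$ of $N$ levels, which are consecutive integers. Each level $\ell$ holds a finite (possibly empty) multiset of normalized significands, each an integer in $[2^{b-1},2^b)$. Let $z$ be the total number of stored significands over all levels; assume $z<2^b$. For each level, $SS_\ell$ is the sum of its significands (so $SS_\ell=0$ iff the level is empty); set $SS_\ell=0$ for integers $\ell\notin\mathcal L$. The level weight is $W_\ell=SS_\ell2^\ell$. For an integer global shift $G$, $A_\ell(G)=\lfloor W_\ell2^G\rfloor+1$ if $SS_\ell>0$ and $A_\ell(G)=0$ if $SS_\ell=0$; $A(G)=\sum_\ell A_\ell(G)$ and $M(G)=\sum_\ell W_\ell2^G$. The configuration is nonempty if $z\ge1$. Inter-level sampler (Algorithm 1), with shift $G$ and $A=A(G)$: it performs independent outer iterations. In an outer iteration, draw $x$ uniformly from $\{1,\dots,A\}$ and scan the levels in decreasing order starting from the largest nonempty level. At the current level $\ell$: if $x<A_\ell(G)$, return $\ell$; if $x=A_\ell(G)$, run the refinement loop for $m=1,2,\dots$: draw $r$ uniformly from $\{0,\dots,2^b-1\}$ independently, let $t=\lfloor SS_\ell 2^{\ell+G+mb}\rfloor \bmod 2^b$; if $r<t$ return $\ell$; else if $r>t$ or $\ell+G+mb\ge 0$, abandon this outer iteration and start a new one; otherwise continue with $m+1$. If $x>A_\ell(G)$,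 set $x\leftarrow x-A_\ell(G)$ and move to the next lower level. *)

From Stdlib Require Import Reals ZArith List Lia.
From Coquelicot Require Import Coquelicot.
Import ListNotations.
Open Scope R_scope.

(* A configuration: parameter b, levels lo, lo+1, ..., lo+N-1, and for each
   level a finite multiset (list) of significands. *)
Record config := Config {
  cb  : nat;
  clo : Z;
  cN  : nat;
  cms : Z -> list nat
}.

Definition levels (c : config) : list Z :=
  map (fun i => (clo c + Z.of_nat i)%Z) (seq 0 (cN c)).

Definition inL (c : config) (l : Z) : Prop :=
  (clo c <= l)%Z /\ (l < clo c + Z.of_nat (cN c))%Z.

Definition inLb (c : config) (l : Z) : bool :=
  andb (clo c <=? l)%Z (l <? clo c + Z.of_nat (cN c))%Z.

Fixpoint sumZ (l : list Z) : Z := match l with [] => 0%Z | x :: t => (x + sumZ t)%Z end.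
Fixpoint sumR (l : list R) : R := match l with [] => 0 | x :: t => x + sumR t end.

Definition SS (c : config) (l : Z) : Z :=
  if inLb c l then Z.of_nat (list_sum (cms c l)) else 0%Z.

Definition zcount (c : config) : nat :=
  list_sum (map (fun l => length (cms c l)) (levels c)).

Definition valid_config (c : config) : Prop :=
  (2 <= cb c)%nat /\
  (forall l, inL c l -> forall s, In s (cms c l) ->
       (2 ^ (cb c - 1) <= s < 2 ^ cb c)%nat) /\
  (zcount c < 2 ^ cb c)%nat.

Definition nonempty (c : config) : Prop := (1 <= zcount c)%nat.

Definition W (c : config) (l : Z) : R := IZR (SS c l) * powerRZ 2 l.

Definition Al (c : config) (G l : Z) : Z :=
  if (0 <? SS c l)%Z then (Int_part (W c l * powerRZ 2 G) + 1)%Z else 0%Z.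

Definition Atot (c : config) (G : Z) : Z := sumZ (map (Al c G) (levels c)).

Definition Mtot (c : config) (G : Z) : R :=
  sumR (map (fun l => W c l * powerRZ 2 G) (levels c)).

Fixpoint skip_empty (c : config) (ls : list Z) : list Z :=
  match ls with
  | [] => []
  | l :: t => if (0 <? SS c l)%Z then ls else skip_empty c t
  end.

Definition scan_order (c : config) : list Z := skip_empty c (rev (levels c)).

Inductive scan_res := SRet (l : Z) | SRef (l : Z) | SNone.

Fixpoint scan (c : config) (G x : Z) (ls : list Z) : scan_res :=
  match ls with
  | [] => SNone
  | l :: t =>
      if (x <? Al c G l)%Z then SRet l
      else if (x =? Al c G l)%Z then SRef l
      else scan c G (x - Al c G l)%Z t
  end.

Definition tdig (c : config) (G l m : Z) : Z :=
  Z.modulo (Int_part (IZR (SS c l) * powerRZ 2 (l + G + m * Z.of_nat (cb c))))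
           (2 ^ Z.of_nat (cb c)).

Definition unif_exp (K : nat) (f : nat -> R) : R :=
  sumR (map (fun r => / INR K * f r) (seq 0 K)).

(* n-step approximation of the probability that the refinement loop, started
   at step m for level l, returns l (least-fixed-point semantics of the loop) *)
Fixpoint refine_n (c : config) (G l : Z) (n : nat) (m : Z) : R :=
  match n with
  | O => 0
  | S n' =>
      unif_exp (2 ^ cb c) (fun r =>
        let t := tdig c G l m in
        if (Z.of_nat r <? t)%Z then 1
        else if orb (t <? Z.of_nat r)%Z (0 <=? l + G + m * Z.of_nat (cb c))%Z then 0
        else refine_n c G l n' (m + 1)%Z)
  end.

Definition refine_prob (c : config) (G l : Z) : R :=
  real (Lim_seq (fun n => refine_n c G l n 1%Z)).

(* probability that one outer iteration (x uniform in {1..A}) returns level l0 *)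
Definition accept_prob (c : config) (G l0 : Z) : R :=
  let A := Atot c G in
  sumR (map (fun i =>
     let x := (Z.of_nat i + 1)%Z in
     / IZR A *
     match scan c G x (scan_order c) with
     | SRet l => if (l =? l0)%Z then 1 else 0
     | SRef l => if (l =? l0)%Z then refine_prob c G l else 0
     | SNone => 0
     end) (seq 0 (Z.to_nat A))).

Definition accept_any_prob (c : config) (G : Z) : R :=
  let A := Atot c G in
  sumR (map (fun i =>
     let x := (Z.of_nat i + 1)%Z in
     / IZR A *
     match scan c G x (scan_order c) with
     | SRet _ => 1
     | SRef l => refine_prob c G l
     | SNone => 0
     end) (seq 0 (Z.to_nat A))).

(* The scan splits the draws x = 1..A into consecutive blocks, one of length A_l for
   each nonempty level l: the first A_l - 1 values of the block return l, the last one
   enters the refinement loop.  At step m the loop compares a uniform b-bit digit with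
   the m-th b-bit digit t of the fractional part of W_l 2^G; "r < t" accepts, "r = t"
   goes on.  Hence it returns l with probability exactly frac(W_l 2^G), and since
   A_l - 1 = floor(W_l 2^G), the block contributes A_l - 1 + frac(W_l 2^G) = W_l 2^G. *)
From Stdlib Require Import Reals ZArith List Lia Lra FinFun.
From Coquelicot Require Import Coquelicot.
Import ListNotations.
Open Scope R_scope.

Lemma sumR_app (a b : list R) : sumR (a ++ b) = sumR a + sumR b.
Proof. induction a; simpl; [ring | rewrite IHa; ring]. Qed.

Lemma sumR_map_scal {A} (k : R) (f : A -> R) s :
  sumR (map (fun x => k * f x) s) = k * sumR (map f s).
Proof. induction s; simpl; [ring | rewrite IHs; ring]. Qed.

Lemma sumR_map_ext {A} (f g : A -> R) s :
  (forall x, In x s -> f x = g x) -> sumR (map f s) = sumR (map g s).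
Proof.
  induction s; simpl; intros H; [ring |].
  rewrite H, IHs by auto. ring.
Qed.

Lemma sumR_map_const {A} (f : A -> R) s v :
  (forall x, In x s -> f x = v) -> sumR (map f s) = INR (length s) * v.
Proof.
  intros H. rewrite (sumR_map_ext f (fun _ => v)) by exact H.
  induction s; cbn -[INR]; [simpl; ring |].
  rewrite IHs, S_INR by (intros; apply H; simpl; auto). ring.
Qed.

Lemma sumR_map_seq_shift (f : nat -> R) a d r :
  sumR (map f (seq (a + d) r)) = sumR (map (fun j => f (a + j)%nat) (seq d r)).
Proof.
  revert d; induction r; intros d; simpl; [ring |].
  replace (S (a + d)) with (a + S d)%nat by lia. rewrite IHr. ring.
Qed.

Lemma sumR_map_rev (h : Z -> R) ls : sumR (map h (rev ls)) = sumR (map h ls).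
Proof. induction ls; simpl; [ring |]. rewrite map_app, sumR_app, IHls. simpl. ring. Qed.

Lemma sumR_map_indicator (v : Z -> R) s l0 : NoDup s -> In l0 s ->
  sumR (map (fun l => if (l =? l0)%Z then v l else 0) s) = v l0.
Proof.
  induction s as [|a s IH]; intros Hnd Hin; [destruct Hin |].
  inversion Hnd as [|? ? Ha Hs]; subst; simpl.
  destruct (Z.eqb_spec a l0) as [-> | Hne].
  - rewrite (sumR_map_const _ _ 0); [ring |].
    intros x Hx. destruct (Z.eqb_spec x l0); [subst; contradiction | reflexivity].
  - destruct Hin as [Hin | Hin]; [congruence |]. rewrite IH by auto. ring.
Qed.

Lemma sumZ_app (a b : list Z) : sumZ (a ++ b) = (sumZ a + sumZ b)%Z.
Proof. induction a; simpl; [ring | rewrite IHa; ring]. Qed.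

Lemma sumZ_map_rev (h : Z -> Z) ls : sumZ (map h (rev ls)) = sumZ (map h ls).
Proof. induction ls; simpl; [ring |]. rewrite map_app, sumZ_app, IHls. simpl. ring. Qed.

Lemma Int_part_bounds r : IZR (Int_part r) <= r < IZR (Int_part r) + 1.
Proof. destruct (base_Int_part r). lra. Qed.

Lemma Int_part_le z r : IZR z <= r -> (z <= Int_part r)%Z.
Proof.
  intros H. destruct (Int_part_bounds r).
  assert (z < Int_part r + 1)%Z by (apply lt_IZR; rewrite plus_IZR; lra). lia.
Qed.

Lemma Int_part_IZR z : Int_part (IZR z) = z.
Proof.
  destruct (Int_part_bounds (IZR z)).
  assert (z <= Int_part (IZR z))%Z by (apply Int_part_le; lra).
  assert (Int_part (IZR z) < z + 1)%Z by (apply lt_IZR; rewrite plus_IZR; lra). lia.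
Qed.

Definition frac (r : R) : R := r - IZR (Int_part r).

Lemma frac_IZR z : frac (IZR z) = 0.
Proof. unfold frac. rewrite Int_part_IZR. ring. Qed.

(* Shifting the base-B expansion of y by one digit: the digit crossing the point is
   floor(B y) mod B. *)
Lemma frac_scale_digit (B : Z) (y : R) : (0 < B)%Z ->
  (0 <= Int_part (IZR B * y) mod B < B)%Z /\
  IZR B * frac y = frac (IZR B * y) + IZR (Int_part (IZR B * y) mod B).
Proof.
  intros HB. unfold frac.
  set (f := Int_part y). set (g := Int_part (IZR B * y)).
  destruct (Int_part_bounds y) as [Hy1 Hy2]; fold f in Hy1, Hy2.
  destruct (Int_part_bounds (IZR B * y)) as [Hg1 Hg2]; fold g in Hg1, Hg2.
  assert (HBR : 0 < IZR B) by (apply IZR_lt; lia).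
  assert (Hle : (B * f <= g)%Z).
  { apply Int_part_le. rewrite mult_IZR. apply Rmult_le_compat_l; lra. }
  assert (Hlt : (g < B * f + B)%Z).
  { apply lt_IZR. rewrite plus_IZR, mult_IZR.
    assert (IZR B * y < IZR B * (IZR f + 1)) by (apply Rmult_lt_compat_l; lra). lra. }
  assert (Hmod : (g mod B = g - B * f)%Z).
  { replace g with ((g - B * f) + f * B)%Z at 1 by ring.
    rewrite Z_mod_plus_full. apply Z.mod_small. lia. }
  rewrite Hmod. split; [lia |]. rewrite minus_IZR, mult_IZR. ring.
Qed.

Lemma powerRZ2_nonneg p : (0 <= p)%Z -> powerRZ 2 p = IZR (2 ^ p).
Proof.
  intros Hp. rewrite <- (Z2Nat.id p Hp), <- pow_powerRZ.
  change (2 ^ Z.of_nat (Z.to_nat p))%Z with (Z.of_nat 2 ^ Z.of_nat (Z.to_nat p))%Z.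
  rewrite <- Nat2Z.inj_pow, <- INR_IZR_INZ, pow_INR. reflexivity.
Qed.

Lemma sum_digit_comparison K t (s : bool) v : (0 <= t)%Z ->
  sumR (map (fun r => if (Z.of_nat r <? t)%Z then 1
                      else if orb (t <? Z.of_nat r)%Z s then 0 else v) (seq 0 K))
  = IZR (Z.min t (Z.of_nat K)) + (if andb (t <? Z.of_nat K)%Z (negb s) then v else 0).
Proof.
  intros Ht. induction K as [|K IH].
  - simpl. replace (Z.min t 0) with 0%Z by lia.
    destruct (Z.ltb_spec t 0); [lia |]. simpl. ring.
  - rewrite seq_S, map_app, sumR_app, IH. cbn [map sumR]. rewrite Nat.add_0_l.
    rewrite Nat2Z.inj_succ.
    destruct (Z.ltb_spec (Z.of_nat K) t);
      [| destruct (Z.ltb_spec t (Z.of_nat K))].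
    + replace (Z.min t (Z.succ (Z.of_nat K))) with (Z.of_nat K + 1)%Z by lia.
      replace (Z.min t (Z.of_nat K)) with (Z.of_nat K) by lia.
      destruct (Z.ltb_spec t (Z.of_nat K)); [lia |].
      destruct (Z.ltb_spec t (Z.succ (Z.of_nat K))); [lia |].
      rewrite plus_IZR. simpl. ring.
    + replace (Z.min t (Z.succ (Z.of_nat K))) with t by lia.
      replace (Z.min t (Z.of_nat K)) with t by lia.
      destruct (Z.ltb_spec t (Z.succ (Z.of_nat K))); [| lia]. simpl. ring.
    + assert (t = Z.of_nat K) as -> by lia.
      rewrite Z.min_id, Z.min_l by lia.
      destruct (Z.ltb_spec (Z.of_nat K) (Z.succ (Z.of_nat K))); [| lia].
      destruct s; simpl; ring.
Qed.

Lemma unif_exp_digit_comparison K t (s : bool) v : (0 <= t < Z.of_nat K)%Z ->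
  unif_exp K (fun r => if (Z.of_nat r <? t)%Z then 1
                       else if orb (t <? Z.of_nat r)%Z s then 0 else v)
  = / INR K * (IZR t + if s then 0 else v).
Proof.
  intros Ht. unfold unif_exp. rewrite sumR_map_scal, sum_digit_comparison by lia.
  rewrite Z.min_l by lia.
  destruct (Z.ltb_spec t (Z.of_nat K)); [| lia]. destruct s; simpl; ring.
Qed.

(** * The refinement loop *)

Section Refinement.
Variables (c : config) (G l : Z).

Let bz := Z.of_nat (cb c).
Let B := (2 ^ bz)%Z.

Lemma radix_pos : (0 < B)%Z.
Proof. apply Z.pow_pos_nonneg; unfold bz; lia. Qed.

Lemma powerRZ2_split p : powerRZ 2 p = IZR B * powerRZ 2 (p - bz).
Proof.
  unfold B. rewrite <- powerRZ2_nonneg by (unfold bz; lia).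
  rewrite <- powerRZ_add by lra. f_equal. lia.
Qed.

(* [tail_value m] carries the digits of SS_l 2^(l+G) from step m on after the point. *)
Definition tail_value (m : Z) : R := IZR (SS c l) * powerRZ 2 (l + G + m * bz - bz).

Lemma tail_value_succ m : tail_value (m + 1) = IZR B * tail_value m.
Proof.
  unfold tail_value. rewrite (powerRZ2_split (l + G + (m + 1) * bz - bz)).
  replace (l + G + (m + 1) * bz - bz - bz)%Z with (l + G + m * bz - bz)%Z by ring.
  ring.
Qed.

Lemma tdig_tail_value m : tdig c G l m = (Int_part (IZR B * tail_value m) mod B)%Z.
Proof.
  unfold tdig, tail_value. fold bz B. do 2 f_equal.
  rewrite (powerRZ2_split (l + G + m * bz)). ring.
Qed.

Lemma refine_step m n :
  refine_n c G l (S n) m =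
  / IZR B * (IZR (tdig c G l m)
             + if (0 <=? l + G + m * bz)%Z then 0 else refine_n c G l n (m + 1)).
Proof.
  cbn [refine_n]. fold bz.
  assert (HK : Z.of_nat (2 ^ cb c) = B) by (rewrite Nat2Z.inj_pow; reflexivity).
  assert (Ht := proj1 (frac_scale_digit B (tail_value m) radix_pos)).
  rewrite <- tdig_tail_value in Ht.
  rewrite unif_exp_digit_comparison by (rewrite HK; exact Ht).
  rewrite INR_IZR_INZ, HK. reflexivity.
Qed.

(* Once the exponent is nonnegative, [B * tail_value m] is an integer, so the last
   digit alone accounts for [frac (tail_value m)]. *)
Lemma refine_n_last_digit m n : (0 <= l + G + m * bz)%Z ->
  refine_n c G l (S n) m = frac (tail_value m).
Proof.
  intros Hexp. assert (HBR : 0 < IZR B) by (apply IZR_lt, radix_pos).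
  destruct (frac_scale_digit B (tail_value m) radix_pos) as [_ Hdigit].
  assert (Hint : IZR B * tail_value m = IZR (SS c l * 2 ^ (l + G + m * bz))).
  { unfold tail_value. rewrite mult_IZR, <- powerRZ2_nonneg by exact Hexp.
    rewrite (powerRZ2_split (l + G + m * bz)). ring. }
  rewrite Hint, frac_IZR in Hdigit.
  rewrite refine_step, tdig_tail_value, Hint.
  destruct (Z.leb_spec 0 (l + G + m * bz)); [| lia].
  apply (Rmult_eq_reg_l (IZR B)); [rewrite Hdigit; field |]; lra.
Qed.

Lemma refine_n_frac k : forall m n,
  (0 <= l + G + (m + Z.of_nat k) * bz)%Z -> (k < n)%nat ->
  refine_n c G l n m = frac (tail_value m).
Proof.
  induction k as [|k IH]; intros m n Hexp Hn; destruct n as [|n]; try lia.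
  - apply refine_n_last_digit. lia.
  - destruct (Z.leb_spec 0 (l + G + m * bz)) as [Hstop | Hgo].
    + apply refine_n_last_digit, Hstop.
    + assert (HBR : 0 < IZR B) by (apply IZR_lt, radix_pos).
      destruct (frac_scale_digit B (tail_value m) radix_pos) as [_ Hdigit].
      rewrite refine_step, tdig_tail_value, IH, tail_value_succ by lia.
      destruct (Z.leb_spec 0 (l + G + m * bz)); [lia |].
      apply (Rmult_eq_reg_l (IZR B)); [rewrite Hdigit; field |]; lra.
Qed.

Lemma refine_prob_frac : (1 <= cb c)%nat ->
  refine_prob c G l = frac (W c l * powerRZ 2 G).
Proof.
  intros Hb. unfold refine_prob.
  rewrite (Lim_seq_ext_loc _ (fun _ => frac (tail_value 1))).
  - rewrite Lim_seq_const. unfold tail_value, W.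
    rewrite Z.mul_1_l, Z.add_simpl_r, Rmult_assoc, <- powerRZ_add by lra.
    reflexivity.
  - set (k := Z.to_nat (- (l + G))). exists (S k). intros n Hn.
    apply (refine_n_frac k); [| lia].
    assert (1 <= bz)%Z by (unfold bz; lia). unfold k. nia.
Qed.

End Refinement.

(** * Decomposition of the scan *)

Lemma W_scaled_nonneg c G l : 0 <= W c l * powerRZ 2 G.
Proof.
  unfold W, SS.
  assert (0 < powerRZ 2 l) by (apply powerRZ_lt; lra).
  assert (0 < powerRZ 2 G) by (apply powerRZ_lt; lra).
  assert (0 <= IZR (if inLb c l then Z.of_nat (list_sum (cms c l)) else 0))
    by (apply IZR_le; destruct (inLb c l); lia).
  apply Rmult_le_pos; [apply Rmult_le_pos |]; lra.
Qed.

Lemma W_eq0 c l : (0 <? SS c l)%Z = false -> W c l = 0.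
Proof.
  intros E. apply Z.ltb_ge in E. unfold W.
  assert (SS c l = 0%Z) as -> by (unfold SS in *; destruct (inLb c l); lia).
  simpl. ring.
Qed.

Lemma Al_gt0 c G l : (0 <? SS c l)%Z = true -> (0 < Al c G l)%Z.
Proof.
  intros E. unfold Al. rewrite E.
  assert (0 <= Int_part (W c l * powerRZ 2 G))%Z
    by (apply Int_part_le, W_scaled_nonneg). lia.
Qed.

Lemma Al_ge0 c G l : (0 <= Al c G l)%Z.
Proof.
  destruct (0 <? SS c l)%Z eqn:E; [apply Z.lt_le_incl, Al_gt0, E |].
  unfold Al. rewrite E. lia.
Qed.

Lemma sumZ_Al_ge0 c G ls : (0 <= sumZ (map (Al c G) ls))%Z.
Proof. induction ls; simpl; [lia |]. pose proof (Al_ge0 c G a). lia. Qed.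

Lemma scan_block_sum c G (F : scan_res -> R) l t :
  sumR (map (fun i => F (scan c G (Z.of_nat i + 1) (l :: t)))
            (seq 0 (Z.to_nat (Al c G l))))
  = if (0 <? Al c G l)%Z then (IZR (Al c G l) - 1) * F (SRet l) + F (SRef l) else 0.
Proof.
  pose proof (Al_ge0 c G l) as H0.
  set (a := Z.to_nat (Al c G l)).
  assert (Ha : Al c G l = Z.of_nat a) by (unfold a; lia). rewrite Ha.
  destruct a as [|a]; [reflexivity |].
  destruct (Z.ltb_spec 0 (Z.of_nat (S a))); [| lia].
  rewrite seq_S, map_app, sumR_app, (sumR_map_const _ _ (F (SRet l))).
  - cbn [map sumR scan]. rewrite Ha.
    destruct (Z.ltb_spec (Z.of_nat (0 + a) + 1) (Z.of_nat (S a))); [lia |].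
    destruct (Z.eqb_spec (Z.of_nat (0 + a) + 1) (Z.of_nat (S a))); [| lia].
    rewrite length_seq, <- INR_IZR_INZ, S_INR. ring.
  - intros i Hi. apply in_seq in Hi. cbn [scan]. rewrite Ha.
    destruct (Z.ltb_spec (Z.of_nat i + 1) (Z.of_nat (S a))); [reflexivity | lia].
Qed.

Lemma scan_sum c G (F : scan_res -> R) ls :
  sumR (map (fun i => F (scan c G (Z.of_nat i + 1) ls))
            (seq 0 (Z.to_nat (sumZ (map (Al c G) ls)))))
  = sumR (map (fun l => if (0 <? Al c G l)%Z
                        then (IZR (Al c G l) - 1) * F (SRet l) + F (SRef l) else 0) ls).
Proof.
  induction ls as [|l t IH]; [reflexivity |].
  cbn [map sumZ sumR].
  pose proof (Al_ge0 c G l). pose proof (sumZ_Al_ge0 c G t).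
  rewrite Z2Nat.inj_add, seq_app, map_app, sumR_app, scan_block_sum by lia.
  f_equal. rewrite <- IH, Nat.add_0_l, <- (Nat.add_0_r (Z.to_nat (Al c G l))).
  rewrite sumR_map_seq_shift. apply sumR_map_ext. intros j _. cbn [scan].
  destruct (Z.ltb_spec (Z.of_nat (Z.to_nat (Al c G l) + j) + 1) (Al c G l)); [lia |].
  destruct (Z.eqb_spec (Z.of_nat (Z.to_nat (Al c G l) + j) + 1) (Al c G l)); [lia |].
  replace (Z.of_nat (Z.to_nat (Al c G l) + j) + 1 - Al c G l)%Z with (Z.of_nat j + 1)%Z
    by lia.
  reflexivity.
Qed.

Lemma sumZ_skip_empty c G ls :
  sumZ (map (Al c G) (skip_empty c ls)) = sumZ (map (Al c G) ls).
Proof.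
  induction ls as [|a ls IH]; simpl; [reflexivity |].
  destruct (0 <? SS c a)%Z eqn:E; [reflexivity |].
  rewrite IH. unfold Al at 2. rewrite E. ring.
Qed.

Lemma sumR_skip_empty c (h : Z -> R) ls :
  (forall l, (0 <? SS c l)%Z = false -> h l = 0) ->
  sumR (map h (skip_empty c ls)) = sumR (map h ls).
Proof.
  intros H. induction ls as [|a ls IH]; simpl; [reflexivity |].
  destruct (0 <? SS c a)%Z eqn:E; [reflexivity |]. rewrite IH, H by auto. ring.
Qed.

Lemma Atot_scan_order c G : Atot c G = sumZ (map (Al c G) (scan_order c)).
Proof. unfold Atot, scan_order. rewrite sumZ_skip_empty, sumZ_map_rev. reflexivity. Qed.

Lemma level_contribution c G l (h : Z -> R) : (1 <= cb c)%nat ->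
  (if (0 <? Al c G l)%Z
   then (IZR (Al c G l) - 1) * h l + h l * refine_prob c G l else 0)
  = h l * (W c l * powerRZ 2 G).
Proof.
  intros Hb. destruct (0 <? SS c l)%Z eqn:ES.
  - pose proof (Al_gt0 c G l ES) as HA. apply Z.ltb_lt in HA. rewrite HA.
    rewrite refine_prob_frac by exact Hb.
    unfold Al, frac. rewrite ES, plus_IZR. simpl. ring.
  - rewrite W_eq0 by exact ES. unfold Al. rewrite ES. simpl. ring.
Qed.

Lemma accept_weighted_sum c G (h : Z -> R) (F : scan_res -> R) : (1 <= cb c)%nat ->
  (forall l, F (SRet l) = h l) -> (forall l, F (SRef l) = h l * refine_prob c G l) ->
  sumR (map (fun i => F (scan c G (Z.of_nat i + 1) (scan_order c)))
            (seq 0 (Z.to_nat (Atot c G))))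
  = sumR (map (fun l => h l * (W c l * powerRZ 2 G)) (levels c)).
Proof.
  intros Hb HRet HRef. rewrite Atot_scan_order, scan_sum.
  rewrite (sumR_map_ext _ (fun l => h l * (W c l * powerRZ 2 G)));
    [| intros l _; rewrite HRet, HRef; apply level_contribution, Hb].
  unfold scan_order. rewrite sumR_skip_empty, sumR_map_rev; [reflexivity |].
  intros l E. rewrite W_eq0 by exact E. ring.
Qed.

Lemma levels_NoDup c : NoDup (levels c).
Proof.
  apply Injective_map_NoDup; [| apply seq_NoDup].
  intros x y H. lia.
Qed.

Lemma in_levels c l : inL c l -> In l (levels c).
Proof.
  intros [H1 H2]. apply in_map_iff.
  exists (Z.to_nat (l - clo c)). split; [lia |]. apply in_seq. lia.
Qed.

Theorem mainTheorem2 (c : config) (G : Z) :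
  valid_config c -> nonempty c ->
  (forall l : Z, inL c l ->
     accept_prob c G l = W c l * powerRZ 2 G / IZR (Atot c G)) /\
  accept_any_prob c G = Mtot c G / IZR (Atot c G).
Proof.
  intros [Hb _] _. assert (Hb1 : (1 <= cb c)%nat) by lia.
  split.
  - intros l0 Hl0. unfold accept_prob. rewrite sumR_map_scal.
    rewrite (accept_weighted_sum c G (fun l => if (l =? l0)%Z then 1 else 0)
      (fun res => match res with
                  | SRet l => if (l =? l0)%Z then 1 else 0
                  | SRef l => if (l =? l0)%Z then refine_prob c G l else 0
                  | SNone => 0 end))
      by (exact Hb1 || (intros l; destruct (l =? l0)%Z; ring)).
    rewrite (sumR_map_ext _ (fun l => if (l =? l0)%Z then W c l * powerRZ 2 G else 0))
      by (intros l _; destruct (l =? l0)%Z; ring).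
    rewrite sumR_map_indicator by auto using levels_NoDup, in_levels.
    unfold Rdiv. ring.
  - unfold accept_any_prob. rewrite sumR_map_scal.
    rewrite (accept_weighted_sum c G (fun _ => 1)
      (fun res => match res with
                  | SRet _ => 1 | SRef l => refine_prob c G l | SNone => 0 end))
      by (exact Hb1 || (intros; ring)).
    unfold Mtot, Rdiv. rewrite (sumR_map_ext _ (fun l => W c l * powerRZ 2 G))
      by (intros; ring). ring.
Qed.
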